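(* For all $P,Q\in\Gamma_n$, $$0\le M_{SA}(P\|Q)\le \tfrac13 M_{SH}(P\|Q)\qquad\text{and}\qquad 0\le \xi_{SA}(P\|Q)\le \tfrac13\xi_{SH}(P\|Q).$$
   Context: $\Gamma_n=\{P=(p_1,\dots,p_n): p_i>0,\ \sum_i p_i=1\}$, $n\ge2$. For $f:(0,\infty)\to\mathbb{R}$, $C_f(P\|Q)=\sum_{i=1}^n q_i f(p_i/q_i)$; for differentiable $f$, $E_f(P\|Q)=\sum_{i=1}^n (p_i-q_i) f'(p_i/q_i)$ and $\xi_f=E_f-C_f$. With $f_{SA}(x)=\sqrt{(x^2+1)/2}-\frac{x+1}{2}$ and $f_{SH}(x)=\sqrt{(x^2+1)/2}-\frac{2x}{x+1}$: $M_{SA}=C_{f_{SA}}=\sum_i\sqrt{(p_i^2+q_i^2)/2}-1$, $M_{SH}=C_{f_{SH}}=\sum_i\big(\sqrt{(p_i^2+q_i^2)/2}-\frac{2p_iq_i}{p_i+q_i}\big)$, $\xi_{SA}=\xi_{f_{SA}}$, $\xi_{SH}=\xi_{f_{SH}}$. *)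

From HB Require Import structures.
From mathcomp Require Import all_boot all_order all_algebra.
From mathcomp Require Import all_classical all_reals all_analysis.
Set Implicit Arguments. Unset Strict Implicit. Unset Printing Implicit Defensive.
Import Order.TTheory GRing.Theory Num.Theory.
Local Open Scope ring_scope.

Definition Gamma {R : realType} (n : nat) (P : 'I_n -> R) : Prop :=
  (forall i, 0 < P i) /\ \sum_(i < n) P i = 1.

Definition Cf {R : realType} {n : nat} (f : R -> R) (P Q : 'I_n -> R) : R :=
  \sum_(i < n) Q i * f (P i / Q i).

Definition Ef {R : realType} {n : nat} (f : R -> R) (P Q : 'I_n -> R) : R :=
  \sum_(i < n) (P i - Q i) * (derive1 f (P i / Q i)).

Definition xi_f {R : realType} {n : nat} (f : R -> R) (P Q : 'I_n -> R) : R :=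
  Ef f P Q - Cf f P Q.

Definition f_SA {R : realType} (x : R) : R :=
  Num.sqrt ((x ^+ 2 + 1) / 2) - (x + 1) / 2.

Definition f_SH {R : realType} (x : R) : R :=
  Num.sqrt ((x ^+ 2 + 1) / 2) - (2 * x) / (x + 1).

Definition M_SA {R : realType} {n : nat} (P Q : 'I_n -> R) : R := Cf f_SA P Q.
Definition M_SH {R : realType} {n : nat} (P Q : 'I_n -> R) : R := Cf f_SH P Q.
Definition xi_SA {R : realType} {n : nat} (P Q : 'I_n -> R) : R := xi_f f_SA P Q.
Definition xi_SH {R : realType} {n : nat} (P Q : 'I_n -> R) : R := xi_f f_SH P Q.

From HB Require Import structures.
From mathcomp Require Import all_boot all_order all_algebra.
From mathcomp Require Import all_classical all_reals all_analysis.
From mathcomp Require Import ring lra.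
Import Order.TTheory GRing.Theory Num.Theory.
Local Open Scope ring_scope.

(* Both M and xi are f-divergences with positive weights: xi_f is the
   divergence of g x = (x - 1) f'(x) - f(x).  So it suffices to compare the
   generating functions pointwise on (0, +oo).  With s = sqrt((x^2 + 1)/2),
   the identity 2 s^2 = x^2 + 1 reduces each of the four comparisons to a
   manifestly nonnegative expression in s and x, using 2 s >= x + 1
   (quadratic mean >= arithmetic mean). *)

Definition xi_kernel {R : realType} (f : R -> R) (x : R) : R :=
  (x - 1) * derive1 f x - f x.

Section FDivergence.
Variables (R : realType) (n : nat).
Implicit Types (f g : R -> R) (P Q : 'I_n -> R).

Lemma Cf_ge0 f P Q : (forall i, 0 < P i) -> (forall i, 0 < Q i) ->
  (forall x, 0 < x -> 0 <= f x) -> 0 <= Cf f P Q.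
Proof.
move=> P_gt0 Q_gt0 f_ge0; apply: sumr_ge0 => i _.
by rewrite mulr_ge0 ?f_ge0 ?divr_gt0 // ltW.
Qed.

Lemma ler_Cf_scale f g c P Q : (forall i, 0 < P i) -> (forall i, 0 < Q i) ->
  (forall x, 0 < x -> f x <= g x * c) -> Cf f P Q <= Cf g P Q * c.
Proof.
move=> P_gt0 Q_gt0 le_fg; rewrite /Cf mulr_suml; apply: ler_sum => i _.
by rewrite -mulrA ler_pM2l ?le_fg ?divr_gt0.
Qed.

Lemma xi_fE f P Q : (forall i, Q i != 0) -> xi_f f P Q = Cf (xi_kernel f) P Q.
Proof.
move=> Q_neq0; rewrite /xi_f /Ef /Cf -sumrB; apply: eq_bigr => i _.
rewrite /xi_kernel mulrBr mulrA mulrBr mulr1 mulrCA divff ?mulr1 //.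
Qed.

End FDivergence.

Section SqrtMean.
Variable R : realType.
Implicit Types x : R.

Local Notation sqrt_mean x := (Num.sqrt ((x ^+ 2 + 1) / 2)).

Lemma sqrt_mean_gt0 x : 0 < sqrt_mean x.
Proof. by rewrite sqrtr_gt0 divr_gt0 // ltr_wpDl ?sqr_ge0. Qed.

Lemma sqr_sqrt_mean x : 2 * sqrt_mean x ^+ 2 = x ^+ 2 + 1.
Proof.
by rewrite sqr_sqrtr ?divr_ge0 ?addr_ge0 ?sqr_ge0 // mulrC divfK ?pnatr_eq0.
Qed.

Lemma mean_le_sqrt_mean x : x + 1 <= 2 * sqrt_mean x.
Proof.
have s_gt0 := sqrt_mean_gt0 x; have s2 := sqr_sqrt_mean x.
have : 0 <= (x - 1) ^+ 2 by exact: sqr_ge0.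
nra.
Qed.

Lemma is_derive_sqrt_mean x :
  is_derive x 1 (fun y => sqrt_mean y) (x / (2 * sqrt_mean x)).
Proof.
have d_arg : is_derive x 1 (fun y : R => (y ^+ 2 + 1) / 2) x.
  have := is_deriveM (is_deriveD (is_deriveX 2 (is_derive_id x 1))
    (is_derive_cst (1 : R) x 1)) (is_derive_cst (2^-1 : R) x 1).
  move/is_derive_eq; apply; rewrite scaler0 add0r addr0.
  by rewrite -[LHS]/(2^-1 * (2 * x * 1)); field.
have d_sqrt : is_derive ((x ^+ 2 + 1) / 2) 1 Num.sqrt (2 * sqrt_mean x)^-1.
  by apply: is_derive1_sqrt; rewrite divr_gt0 // ltr_wpDl ?sqr_ge0.
have := @is_derive1_comp R _ (fun y : R => (y ^+ 2 + 1) / 2) x _ _ d_sqrt d_arg.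
by rewrite mulrC.
Qed.

Lemma is_derive_mean x : is_derive x 1 (fun y : R => (y + 1) / 2) (1 / 2).
Proof.
have := is_deriveM (is_deriveD (is_derive_id x 1) (is_derive_cst (1 : R) x 1))
  (is_derive_cst (2^-1 : R) x 1).
by move/is_derive_eq; apply; rewrite scaler0 add0r addr0 mul1r; exact: mulr1.
Qed.

Lemma derive1_f_SA x : derive1 f_SA x = x / (2 * sqrt_mean x) - 1 / 2.
Proof.
rewrite derive1E; apply: derive_val.
exact: is_deriveB (is_derive_sqrt_mean x) (is_derive_mean x).
Qed.

Lemma is_derive_harmonic_mean x : x + 1 != 0 ->
  is_derive x 1 (fun y : R => 2 * y / (y + 1)) (2 / (x + 1) ^+ 2).
Proof.
move=> x1_neq0.
have d_inv := @is_deriveV R (fun y => y + 1) x _ 1 x1_neq0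
  (is_deriveD (is_derive_id x 1) (is_derive_cst (1 : R) x 1)).
have := is_deriveM (is_deriveZ 2 (is_derive_id x 1)) d_inv.
move/is_derive_eq; apply; rewrite addr0.
rewrite -[LHS]/(2 * x * (- (x + 1) ^- 2 * 1) + (x + 1)^-1 * (2 * 1)).
by field.
Qed.

Lemma derive1_f_SH x : x + 1 != 0 ->
  derive1 f_SH x = x / (2 * sqrt_mean x) - 2 / (x + 1) ^+ 2.
Proof.
move=> x1_neq0; rewrite derive1E; apply: derive_val.
exact: is_deriveB (is_derive_sqrt_mean x) (is_derive_harmonic_mean _ x1_neq0).
Qed.

Lemma f_SA_ge0 x : 0 <= f_SA x.
Proof. by rewrite /f_SA subr_ge0 ler_pdivrMr // mulrC mean_le_sqrt_mean. Qed.

Lemma f_SA_le_f_SH x : 0 < x + 1 -> f_SA x <= f_SH x / 3.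
Proof.
move=> x1_gt0; rewrite /f_SA /f_SH -subr_ge0.
set s := sqrt_mean x.
have -> : (s - 2 * x / (x + 1)) / 3 - (s - (x + 1) / 2) =
    (2 * s - (x + 1)) ^+ 2 / (6 * (x + 1)) + (x ^+ 2 + 1 - 2 * s ^+ 2) / (3 * (x + 1)).
  by field; rewrite gt_eqF.
by rewrite -sqr_sqrt_mean subrr mul0r addr0 divr_ge0 ?sqr_ge0 ?mulr_ge0 // ltW.
Qed.

Lemma xi_kernel_f_SA_ge0 x : 0 <= xi_kernel f_SA x.
Proof.
rewrite /xi_kernel derive1_f_SA /f_SA.
set s := sqrt_mean x; have s_gt0 : 0 < s := sqrt_mean_gt0 x.
have -> : (x - 1) * (x / (2 * s) - 1 / 2) - (s - (x + 1) / 2) =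
    (2 * s - (x + 1)) / (2 * s) + (x ^+ 2 + 1 - 2 * s ^+ 2) / (2 * s).
  by field; rewrite gt_eqF.
rewrite -sqr_sqrt_mean subrr mul0r addr0 divr_ge0 ?subr_ge0 ?mean_le_sqrt_mean //.
by rewrite mulr_ge0 // ltW.
Qed.

Lemma xi_kernel_f_SA_le x : 0 < x + 1 -> xi_kernel f_SA x <= xi_kernel f_SH x / 3.
Proof.
move=> x1_gt0; rewrite /xi_kernel derive1_f_SA derive1_f_SH ?gt_eqF // /f_SA /f_SH.
set s := sqrt_mean x; have s_gt0 : 0 < s := sqrt_mean_gt0 x.
rewrite -subr_ge0.
have -> : ((x - 1) * (x / (2 * s) - 2 / (x + 1) ^+ 2) - (s - 2 * x / (x + 1))) / 3 -
    ((x - 1) * (x / (2 * s) - 1 / 2) - (s - (x + 1) / 2)) =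
    (2 * (2 * s - (x + 1)) ^+ 2 * (s + (x + 1))
      - (x ^+ 2 + 1 - 2 * s ^+ 2) * (2 * (x + 1) ^+ 2 - 4 * s))
    / (6 * s * (x + 1) ^+ 2).
  by field; rewrite !gt_eqF.
rewrite -sqr_sqrt_mean subrr mul0r subr0.
have den_ge0 : 0 <= 6 * s * (x + 1) ^+ 2 by rewrite !mulr_ge0 ?sqr_ge0 ?ltW.
have sq_ge0 : 0 <= 2 * (2 * s - (x + 1)) ^+ 2 by rewrite mulr_ge0 ?sqr_ge0.
by rewrite divr_ge0 // mulr_ge0 // addr_ge0 // ltW.
Qed.

End SqrtMean.

Theorem proposition5p1 (R : realType) (n : nat) (P Q : 'I_n -> R) :
  (2 <= n)%N -> Gamma P -> Gamma Q ->
  (0 <= M_SA P Q /\ M_SA P Q <= M_SH P Q / 3) /\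
  (0 <= xi_SA P Q /\ xi_SA P Q <= xi_SH P Q / 3).
Proof.
move=> _ [P_gt0 _] [Q_gt0 _].
have Q_neq0 i : Q i != 0 by rewrite gt_eqF.
have succ_gt0 (x : R) : 0 < x -> 0 < x + 1 by move=> x_gt0; rewrite addr_gt0.
rewrite /xi_SA /xi_SH !xi_fE //; split; split.
- by apply: Cf_ge0 => // x _; apply: f_SA_ge0.
- by apply: ler_Cf_scale => // x /succ_gt0; apply: f_SA_le_f_SH.
- by apply: Cf_ge0 => // x _; apply: xi_kernel_f_SA_ge0.
- by apply: ler_Cf_scale => // x /succ_gt0; apply: xi_kernel_f_SA_le.
Qed.
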